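(* Let $f,g\in\mathcal{S}$ and $\tau\in\mathbb{C}$, $\tau\ne0$. Suppose there are $r_0\in(0,1)$ and $\varepsilon>0$ with $\sup_{r_0<|z|<1}|N_g(z)-N_f(z)|(1-|z|^2)<\varepsilon$. Let $\mathbf{h}=g\circ f^{-1}$. Then there exist constants $C_1,C_2>0$ such that $C_1\left(\frac{1-|z|}{1+|z|}\right)^{|\tau|\varepsilon/2}\le|[\mathbf{h}'\circ f(z)]^\tau|\le C_2\left(\frac{1+|z|}{1-|z|}\right)^{|\tau|\varepsilon/2}$ for all $z$ with $r_0<|z|<1$.
   Context: $\Delta$ unit disk; $\mathcal{S}$ the class of univalent $f$ on $\Delta$ with $f(0)=0,f'(0)=1$; $N_f=f''/f'$. Since $\mathbf{h}'\circ f=g'/f'$ is nonvanishing on $\Delta$ with value $1$ at $0$, $[\mathbf{h}'\circ f(z)]^\tau=\exp(\tau\log(\mathbf{h}'\circ f)(z))$ with the branch of the logarithm vanishing at $0$. *)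

From Stdlib Require Import Reals.
From Coquelicot Require Import Coquelicot.
Open Scope R_scope.

Definition cderiv (f : C -> C) (z l : C) : Prop :=
  is_derive (K:=C_AbsRing) (V:=C_NormedModule) f z l.

Definition in_disk (z : C) : Prop := Cmod z < 1.

Definition cexp (z : C) : C :=
  (exp (fst z) * cos (snd z), exp (fst z) * sin (snd z)).

Definition classS (f f1 f2 : C -> C) : Prop :=
  (forall z, in_disk z -> cderiv f z (f1 z)) /\
  (forall z, in_disk z -> cderiv f1 z (f2 z)) /\
  (forall z w, in_disk z -> in_disk w -> f z = f w -> z = w) /\
  f (RtoC 0) = RtoC 0 /\ f1 (RtoC 0) = RtoC 1.

Definition preSchw (f1 f2 : C -> C) (z : C) : C := Cdiv (f2 z) (f1 z).

Definition cont_on_disk (L : C -> C) : Prop :=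
  forall z, in_disk z -> continuous (T:=C_UniformSpace) (U:=C_UniformSpace) L z.

(** Write F = tau * L. Since L is a continuous logarithm of g'/f', it is
    holomorphic with L' = N_g - N_f, so the hypothesis says that beyond radius
    r0 the derivative |F'| is at most k = |tau| eps / 2 times the hyperbolic
    density 2 / (1 - |z|^2). Along a radius [r0 u, r u], Re F therefore changes
    by at most k (d r - d r0), where d t = ln ((1 + t) / (1 - t)) is the
    hyperbolic distance from 0 to t. Re F is bounded on the compact circle
    |z| = r0 by continuity, and |exp F| = exp (Re F); both bounds follow, with
    constants absorbing the value of Re F on that circle. *)

From Stdlib Require Import Reals Lra.
From Coquelicot Require Import Coquelicot.
Open Scope R_scope.

(* Coquelicot gives C two uniform structures: C_UniformSpace (product balls),
   used by [continuous] in the definitions, and the Cmod balls of the absolute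
   value ring, used by [is_derive]. They have the same neighbourhoods but are not
   convertible; [Cnear] is the second one. *)
Local Notation Cnear := (@locally (AbsRing_UniformSpace C_AbsRing)).

Lemma Rmult_div_succ_le (a e : R) : 0 <= a -> 0 <= e -> a * (e / (a + 1)) <= e.
Proof.
  intros Ha He.
  assert (Hq : e / (a + 1) * (a + 1) = e) by (field; lra).
  assert (0 <= e / (a + 1)) by (apply Rdiv_le_0_compat; lra).
  nra.
Qed.

Lemma Cmod_le_Rabs_fst_snd (z : C) : Cmod z <= Rabs (fst z) + Rabs (snd z).
Proof.
  destruct z as [a b]; unfold Cmod; cbn [fst snd].
  rewrite <- (sqrt_Rsqr (Rabs a + Rabs b)) by (generalize (Rabs_pos a) (Rabs_pos b); lra).
  apply sqrt_le_1_alt; unfold Rsqr.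
  rewrite <- (pow2_abs a), <- (pow2_abs b).
  generalize (Rabs_pos a) (Rabs_pos b); nra.
Qed.

Lemma Rabs_snd_le_Cmod (z : C) : Rabs (snd z) <= Cmod z.
Proof. generalize (Rmax_Cmod z) (Rmax_r (Rabs (fst z)) (Rabs (snd z))); lra. Qed.

Lemma Cmod_sub_le (x y : C) : Cmod (x - y) <= Cmod x + Cmod y.
Proof. rewrite <- (Cmod_opp y); apply Cmod_triangle. Qed.

Lemma Cnear_Cmod (p : C) (P : C -> Prop) :
  Cnear p P <-> exists d, 0 < d /\ forall z, Cmod (z - p) < d -> P z.
Proof.
  split.
  - intros [d Hd]; exists d; split; [apply cond_pos | exact Hd].
  - intros [d [Hd HP]]; exists (mkposreal d Hd); exact HP.
Qed.

Lemma continuous_near (F : C -> C) (p : C) :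
  continuous (T := C_UniformSpace) (U := C_UniformSpace) F p ->
  forall e, 0 < e -> Cnear p (fun z => Cmod (F z - F p) < e).
Proof.
  intros HF e He.
  destruct (locally_norm_le_locally (V := C_NormedModule) p _
    (HF _ (locally_ball_norm (V := C_NormedModule) _ (mkposreal e He)))) as [d Hd].
  exists d; exact Hd.
Qed.

Lemma cderiv_near (F : C -> C) (p l : C) : cderiv F p l ->
  forall e, 0 < e -> Cnear p (fun z => Cmod (F z - F p - (z - p) * l) <= e * Cmod (z - p)).
Proof. intros [_ HF] e He; exact (HF p (fun P HP => HP) (mkposreal e He)). Qed.

Lemma cderiv_intro (F : C -> C) (p l : C) :
  (forall e, 0 < e -> Cnear p (fun z => Cmod (F z - F p - (z - p) * l) <= e * Cmod (z - p))) ->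
  cderiv F p l.
Proof.
  intros HF; split; [apply is_linear_scal_l |].
  intros x Hx; apply (is_filter_lim_locally_unique (V := AbsRing_NormedModule C_AbsRing)) in Hx.
  subst x.
  intros [e He]; exact (HF e He).
Qed.

Lemma cderiv_continuous_near (F : C -> C) (p l : C) : cderiv F p l ->
  forall e, 0 < e -> Cnear p (fun z => Cmod (F z - F p) < e).
Proof.
  intros HF e He.
  exact (ex_derive_continuous F p (ex_intro _ l HF) _
    (locally_ball_norm (V := C_NormedModule) _ (mkposreal e He))).
Qed.

Lemma cderiv_scal (F : C -> C) (p l k : C) :
  cderiv F p l -> cderiv (fun z => k * F z)%C p (k * l)%C.
Proof.
  intros HF; apply cderiv_intro; intros e He.
  assert (Hk : 0 < Cmod k + 1) by (generalize (Cmod_ge_0 k); lra).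
  assert (He' : 0 < e / (Cmod k + 1)) by (apply Rdiv_lt_0_compat; lra).
  eapply filter_imp; [| exact (cderiv_near F p l HF _ He')].
  intros z Hz.
  replace (k * F z - k * F p - (z - p) * (k * l))%C with (k * (F z - F p - (z - p) * l))%C by ring.
  rewrite Cmod_mult.
  apply Rle_trans with (Cmod k * (e / (Cmod k + 1) * Cmod (z - p))).
  - apply Rmult_le_compat_l; [apply Cmod_ge_0 | exact Hz].
  - rewrite <- Rmult_assoc; apply Rmult_le_compat_r; [apply Cmod_ge_0 |].
    apply Rmult_div_succ_le; [apply Cmod_ge_0 | lra].
Qed.

Lemma cexp_add (a b : C) : cexp (a + b) = (cexp a * cexp b)%C.
Proof.
  destruct a as [a1 a2], b as [b1 b2]; unfold cexp; cbn.
  rewrite exp_plus, cos_plus, sin_plus; apply injective_projections; cbn; ring.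
Qed.

Lemma Cmod_cexp (w : C) : Cmod (cexp w) = exp (fst w).
Proof.
  destruct w as [a b]; unfold cexp, Cmod; cbn [fst snd].
  replace ((exp a * cos b) ^ 2 + (exp a * sin b) ^ 2)
    with (exp a * exp a * ((sin b)² + (cos b)²)) by (unfold Rsqr; ring).
  rewrite sin2_cos2, Rmult_1_r; apply sqrt_square; left; apply exp_pos.
Qed.

Lemma cexp_neq_0 (w : C) : cexp w <> 0.
Proof. apply Cmod_gt_0; rewrite Cmod_cexp; apply exp_pos. Qed.

(* Coquelicot's [x / 0] is 0, which is never a value of [cexp]. *)
Lemma cexp_eq_Cdiv (x y w : C) : cexp w = (x / y)%C -> y <> 0 /\ x = (y * cexp w)%C.
Proof.
  intros Hw.
  assert (Hy : y <> 0).
  { intros ->; apply (cexp_neq_0 w); rewrite Hw.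
    apply injective_projections; cbn; unfold Rdiv; rewrite ?Rmult_0_l, ?Rplus_0_r, ?Rinv_0; ring. }
  split; [exact Hy | rewrite Hw; field; exact Hy].
Qed.

Lemma derivable_pt_lim_near (f : R -> R) (x l : R) : derivable_pt_lim f x l ->
  forall e, 0 < e -> exists d, 0 < d /\
    forall h, Rabs h < d -> Rabs (f (x + h) - f x - l * h) <= e * Rabs h.
Proof.
  intros Hf e He; destruct (Hf e He) as [d Hd].
  exists d; split; [apply cond_pos |]; intros h Hh.
  destruct (Req_dec h 0) as [-> | Hh0].
  - rewrite Rplus_0_r, Rmult_0_r, Rabs_R0; unfold Rminus.
    rewrite Rplus_opp_r, Rplus_0_l, Ropp_0, Rabs_R0; lra.
  - replace (f (x + h) - f x - l * h) with (((f (x + h) - f x) / h - l) * h) by (field; exact Hh0).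
    rewrite Rabs_mult; apply Rmult_le_compat_r; [apply Rabs_pos | left; exact (Hd h Hh0 Hh)].
Qed.

Lemma exp_cos_sin_near_0 (e : R) : 0 < e -> exists r, 0 < r /\ r <= e /\
  forall h, Rabs h < r -> Rabs (exp h - 1 - h) <= e * Rabs h /\
    Rabs (cos h - 1) <= e * Rabs h /\ Rabs (sin h - h) <= e * Rabs h.
Proof.
  intros He.
  destruct (derivable_pt_lim_near exp 0 1 derivable_pt_lim_exp_0 e He) as [d1 [Hd1 Hexp]].
  destruct (derivable_pt_lim_near cos 0 0 derivable_pt_lim_cos_0 e He) as [d2 [Hd2 Hcos]].
  destruct (derivable_pt_lim_near sin 0 1 derivable_pt_lim_sin_0 e He) as [d3 [Hd3 Hsin]].
  set (r := Rmin (Rmin d1 d2) (Rmin d3 e)).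
  assert (Hr1 : r <= d1) by (apply (Rle_trans _ _ _ (Rmin_l _ _)), Rmin_l).
  assert (Hr2 : r <= d2) by (apply (Rle_trans _ _ _ (Rmin_l _ _)), Rmin_r).
  assert (Hr3 : r <= d3) by (apply (Rle_trans _ _ _ (Rmin_r _ _)), Rmin_l).
  assert (Hr4 : r <= e) by (apply (Rle_trans _ _ _ (Rmin_r _ _)), Rmin_r).
  exists r; split; [unfold r; repeat apply Rmin_glb_lt; lra | split; [exact Hr4 |]].
  intros h Hh.
  specialize (Hexp h ltac:(lra)); specialize (Hcos h ltac:(lra)); specialize (Hsin h ltac:(lra)).
  rewrite Rplus_0_l, exp_0 in Hexp; rewrite Rplus_0_l, cos_0 in Hcos.
  rewrite Rplus_0_l, sin_0 in Hsin.
  replace (exp h - 1 - 1 * h) with (exp h - 1 - h) in Hexp by ring.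
  replace (cos h - 1 - 0 * h) with (cos h - 1) in Hcos by ring.
  replace (sin h - 0 - 1 * h) with (sin h - h) in Hsin by ring.
  auto.
Qed.

Lemma cexp_near_0 (e : R) : 0 < e ->
  exists r, 0 < r /\ forall w, Cmod w < r -> Cmod (cexp w - 1 - w) <= e * Cmod w.
Proof.
  intros He.
  set (e' := Rmin e 1 / 8).
  assert (He' : 0 < e') by (unfold e'; generalize (Rmin_glb_lt e 1 0 He Rlt_0_1); lra).
  assert (He'e : 8 * e' <= e) by (unfold e'; generalize (Rmin_l e 1); lra).
  assert (He'1 : e' <= 1 / 8) by (unfold e'; generalize (Rmin_r e 1); lra).
  destruct (exp_cos_sin_near_0 e' He') as [r [Hr [Hre' Hrem]]].
  exists r; split; [exact Hr |]; intros [a b] Hw.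
  generalize (re_le_Cmod (a, b)) (Rabs_snd_le_Cmod (a, b)); cbn [Re fst snd]; intros Ha Hb.
  set (W := Cmod (a, b)) in *.
  destruct (Hrem a ltac:(lra)) as [Hexp _]; destruct (Hrem b ltac:(lra)) as [_ [Hcos Hsin]].
  assert (Hcos1 : Rabs (cos b) <= 1) by apply Rabs_le, COS_bound.
  assert (Hsin2 : Rabs (sin b) <= 2 * Rabs b).
  { replace (sin b) with (sin b - b + b) by ring.
    generalize (Rabs_triang (sin b - b) b) (Rabs_pos b); nra. }
  assert (Hexp2 : Rabs (exp a - 1) <= 2 * Rabs a).
  { replace (exp a - 1) with (exp a - 1 - a + a) by ring.
    generalize (Rabs_triang (exp a - 1 - a) a) (Rabs_pos a); nra. }
  assert (Ha1 : Rabs (1 + a) <= 2) by (generalize (Rabs_triang 1 a); rewrite Rabs_R1; lra).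
  assert (Hre : Rabs (exp a * cos b - 1 - a) <= 3 * e' * W).
  { replace (exp a * cos b - 1 - a) with ((exp a - 1 - a) * cos b + (1 + a) * (cos b - 1)) by ring.
    eapply Rle_trans; [apply Rabs_triang | rewrite !Rabs_mult].
    generalize (Rabs_pos (exp a - 1 - a)) (Rabs_pos (cos b)) (Rabs_pos (1 + a))
      (Rabs_pos (cos b - 1)).
    nra. }
  assert (Him : Rabs (exp a * sin b - b) <= 5 * e' * W).
  { replace (exp a * sin b - b) with ((exp a - 1) * sin b + (sin b - b)) by ring.
    eapply Rle_trans; [apply Rabs_triang | rewrite Rabs_mult].
    generalize (Rabs_pos (exp a - 1)) (Rabs_pos (sin b)) (Rabs_pos a) (Rabs_pos b).
    nra. }
  eapply Rle_trans; [apply Cmod_le_Rabs_fst_snd |].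
  unfold Cminus, Cplus, Copp, cexp, RtoC; cbn [fst snd].
  replace (exp a * cos b + - (1) + - a) with (exp a * cos b - 1 - a) by ring.
  replace (exp a * sin b + - 0 + - b) with (exp a * sin b - b) by ring.
  assert (0 <= W) by apply Cmod_ge_0.
  nra.
Qed.

Lemma Rle_absorb (u v s d x : R) :
  0 <= s -> 0 <= d -> 0 <= x <= 1 / 2 ->
  u <= x * (s + v) -> v <= u + d * s -> u <= 2 * x * (1 + d) * s.
Proof.
  intros Hs Hd [Hx0 Hx1] Hu Hv.
  assert (Hxv : x * v <= x * (u + d * s)) by (apply Rmult_le_compat_l; lra).
  assert (Hrhs : 0 <= x * (1 + d) * s) by (apply Rmult_le_pos; [apply Rmult_le_pos |]; lra).
  destruct (Rle_lt_dec u 0); nra.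
Qed.

Lemma cderiv_of_small_remainder (L : C -> C) (p D : C) :
  (forall eta, 0 < eta -> Cnear p (fun z =>
     Cmod (L z - L p - (z - p) * D) <= eta * (Cmod (z - p) + Cmod (L z - L p)))) ->
  cderiv L p D.
Proof.
  intros HL; apply cderiv_intro; intros e He.
  assert (HD : 0 <= Cmod D) by apply Cmod_ge_0.
  set (x := Rmin (1 / 2) (e / (2 * (1 + Cmod D)))).
  assert (Hx : 0 < x <= 1 / 2)
    by (split; [apply Rmin_glb_lt; [lra | apply Rdiv_lt_0_compat; lra] | apply Rmin_l]).
  assert (Hxe : 2 * x * (1 + Cmod D) <= e).
  { assert (x <= e / (2 * (1 + Cmod D))) by apply Rmin_r.
    assert (e / (2 * (1 + Cmod D)) * (2 * (1 + Cmod D)) = e) by (field; lra).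
    nra. }
  eapply filter_imp; [| exact (HL x (proj1 Hx))]; intros z Hz.
  apply Rle_trans with (2 * x * (1 + Cmod D) * Cmod (z - p)).
  - apply (Rle_absorb _ (Cmod (L z - L p))); auto using Cmod_ge_0; [lra |].
    replace (L z - L p)%C with (L z - L p - (z - p) * D + (z - p) * D)%C at 1 by ring.
    eapply Rle_trans; [apply Cmod_triangle | rewrite Cmod_mult; lra].
  - apply Rmult_le_compat_r; [apply Cmod_ge_0 | exact Hxe].
Qed.

Lemma Cmod_remainder_sum_le (T1 T2 X w E Az Ap : C) (eta s : R) :
  0 <= s -> Cmod T1 <= eta * s -> Cmod T2 <= eta * s ->
  Cmod (Az - Ap) < eta -> Cmod (Az - Ap) < 1 -> Cmod X <= eta * Cmod w ->
  Cmod (T1 - E * T2 - E * (Az - Ap) * w - E * Az * X)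
    <= eta * (1 + Cmod E * (Cmod Ap + 2)) * (s + Cmod w).
Proof.
  intros Hs H1 H2 HA HA1 HX.
  assert (HAz : Cmod Az <= Cmod Ap + 1).
  { replace Az with (Az - Ap + Ap)%C by ring.
    generalize (Cmod_triangle (Az - Ap) Ap); lra. }
  eapply Rle_trans; [apply Cmod_sub_le |].
  eapply Rle_trans; [apply Rplus_le_compat_r, Cmod_sub_le |].
  eapply Rle_trans; [apply Rplus_le_compat_r, Rplus_le_compat_r, Cmod_sub_le |].
  rewrite !Cmod_mult.
  generalize (Cmod_ge_0 E) (Cmod_ge_0 Ap) (Cmod_ge_0 Az) (Cmod_ge_0 w) (Cmod_ge_0 (Az - Ap)).
  intros HE0 HAp0 HAz0 Hw0 HA0.
  assert (Heta : 0 <= eta) by lra.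
  assert (Cmod E * Cmod T2 <= Cmod E * (eta * s)) by (apply Rmult_le_compat_l; auto).
  assert (Cmod E * Cmod (Az - Ap) * Cmod w <= Cmod E * eta * Cmod w)
    by (apply Rmult_le_compat_r; [| apply Rmult_le_compat_l]; lra).
  assert (Cmod E * Cmod Az * Cmod X <= Cmod E * (Cmod Ap + 1) * (eta * Cmod w))
    by (apply Rmult_le_compat; [apply Rmult_le_pos | | apply Rmult_le_compat_l |];
        auto using Cmod_ge_0).
  assert (0 <= eta * Cmod E * (Cmod Ap + 1) * s + eta * Cmod w)
    by (apply Rplus_le_le_0_compat; repeat apply Rmult_le_pos; lra).
  assert (eta * (1 + Cmod E * (Cmod Ap + 2)) * (s + Cmod w) = eta * s + Cmod E * (eta * s)
    + Cmod E * eta * Cmod w + Cmod E * (Cmod Ap + 1) * (eta * Cmod w)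
    + (eta * Cmod E * (Cmod Ap + 1) * s + eta * Cmod w)) by ring.
  lra.
Qed.

Lemma cderiv_log (A B L : C -> C) (p a' b' : C) :
  Cnear p (fun z => B z = (A z * cexp (L z))%C) -> A p <> 0 ->
  cderiv A p a' -> cderiv B p b' ->
  continuous (T := C_UniformSpace) (U := C_UniformSpace) L p ->
  cderiv L p (b' / B p - a' / A p)%C.
Proof.
  intros HB HAp dA dB cL.
  set (E := cexp (L p)); set (D := (b' / B p - a' / A p)%C).
  assert (HE : E <> 0) by apply cexp_neq_0.
  assert (HBp : B p = (A p * E)%C) by exact (locally_singleton _ _ HB).
  assert (Hb' : b' = (E * A p * D + E * a')%C) by (unfold D; rewrite HBp; field; auto).
  set (N := Cmod E * Cmod (A p)); set (K := 1 + Cmod E * (Cmod (A p) + 2)).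
  assert (HN : 0 < N) by (apply Rmult_lt_0_compat; apply Cmod_gt_0; auto).
  assert (HK : 0 < K) by (unfold K; generalize (Cmod_ge_0 E) (Cmod_ge_0 (A p)); nra).
  apply cderiv_of_small_remainder; intros eta Heta.
  set (eta' := eta * N / K).
  assert (Heta' : 0 < eta') by (apply Rdiv_lt_0_compat; [apply Rmult_lt_0_compat |]; lra).
  destruct (cexp_near_0 eta' Heta') as [r [Hr Hexp]].
  generalize (filter_and _ _
    (filter_and _ _ (cderiv_near A p a' dA eta' Heta') (cderiv_near B p b' dB eta' Heta'))
    (filter_and _ _
      (filter_and _ _ (cderiv_continuous_near A p a' dA eta' Heta')
                      (cderiv_continuous_near A p a' dA 1 Rlt_0_1))
      (filter_and _ _ (continuous_near L p cL r Hr) HB))).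
  apply filter_imp; intros z [[HA HB'] [[HA0 HA1] [HLr HBz]]].
  set (w := (L z - L p)%C) in *.
  (* Each remainder on the right is at most eta' |z - p| or eta' |w|. *)
  assert (Hid : (E * A p * (w - (z - p) * D) =
     (B z - B p - (z - p) * b') - E * (A z - A p - (z - p) * a')
     - E * (A z - A p) * w - E * A z * (cexp w - 1 - w))%C).
  { assert (HLz : cexp (L z) = (E * cexp w)%C) by (unfold E, w; rewrite <- cexp_add; f_equal; ring).
    rewrite HBz, HBp, Hb', HLz; ring. }
  apply (Rmult_le_reg_l N); [exact HN |].
  replace (N * (eta * (Cmod (z - p) + Cmod w))) with (eta' * K * (Cmod (z - p) + Cmod w))
    by (unfold eta'; field; lra).
  unfold N; rewrite <- !Cmod_mult, Hid.
  apply Cmod_remainder_sum_le; auto using Cmod_ge_0.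
Qed.

Lemma is_derive_fst_ray (F : C -> C) (u l : C) (t : R) :
  cderiv F (RtoC t * u)%C l ->
  is_derive (fun s : R => fst (F (RtoC s * u)%C)) t (fst (u * l)%C).
Proof.
  intros HF; split; [apply is_linear_scal_l |].
  intros x Hx; apply (is_filter_lim_locally_unique (V := AbsRing_NormedModule R_AbsRing)) in Hx.
  subst x.
  intros [e He]; cbn [pos].
  assert (Hu : 0 < Cmod u + 1) by (generalize (Cmod_ge_0 u); lra).
  assert (He' : 0 < e / (Cmod u + 1)) by (apply Rdiv_lt_0_compat; lra).
  destruct (proj1 (Cnear_Cmod _ _) (cderiv_near F _ l HF _ He')) as [d [Hd Hnear]].
  assert (Hd' : 0 < d / (Cmod u + 1)) by (apply Rdiv_lt_0_compat; lra).
  exists (mkposreal _ Hd'); intros s Hs.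
  change (Rabs (s - t) < d / (Cmod u + 1)) in Hs.
  change (Rabs (fst (F (RtoC s * u)%C) - fst (F (RtoC t * u)%C) - (s - t) * fst (u * l)%C)
    <= e * Rabs (s - t)).
  assert (Hsu : (RtoC s * u - RtoC t * u)%C = (RtoC (s - t) * u)%C) by (rewrite RtoC_minus; ring).
  assert (Hm : Cmod (RtoC (s - t) * u)%C = Cmod u * Rabs (s - t))
    by (rewrite Cmod_mult, Cmod_R; apply Rmult_comm).
  specialize (Hnear (RtoC s * u)%C); rewrite Hsu, Hm in Hnear.
  replace (fst (F (RtoC s * u)%C) - fst (F (RtoC t * u)%C) - (s - t) * fst (u * l)%C)
    with (fst (F (RtoC s * u) - F (RtoC t * u) - RtoC (s - t) * u * l)%C)
    by (destruct u, l; cbn; ring).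
  assert (Hst : Cmod u * Rabs (s - t) < d).
  { assert (d / (Cmod u + 1) * (Cmod u + 1) = d) by (field; lra).
    generalize (Rabs_pos (s - t)) (Cmod_ge_0 u); nra. }
  eapply Rle_trans; [apply re_le_Cmod |]; eapply Rle_trans; [exact (Hnear Hst) |].
  replace (e / (Cmod u + 1) * (Cmod u * Rabs (s - t)))
    with (Cmod u * (e / (Cmod u + 1)) * Rabs (s - t)) by ring.
  apply Rmult_le_compat_r; [apply Rabs_pos | apply Rmult_div_succ_le; [apply Cmod_ge_0 | lra]].
Qed.

Lemma Rabs_sub_le_of_is_derive (rho phi drho dphi : R -> R) (a b : R) :
  a < b ->
  (forall c, a <= c <= b -> is_derive rho c (drho c)) ->
  (forall c, a <= c <= b -> is_derive phi c (dphi c)) ->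
  (forall c, a < c < b -> Rabs (drho c) <= dphi c) ->
  Rabs (rho b - rho a) <= phi b - phi a.
Proof.
  intros Hab Hrho Hphi Hle.
  destruct (MVT_cor2 (fun s => rho s - phi s) (fun s => drho s - dphi s) a b Hab)
    as [c [Hc Hcab]].
  { intros c Hc; apply derivable_pt_lim_minus; apply is_derive_Reals; auto. }
  destruct (MVT_cor2 (fun s => rho s + phi s) (fun s => drho s + dphi s) a b Hab)
    as [c' [Hc' Hcab']].
  { intros c' Hc'; apply derivable_pt_lim_plus; apply is_derive_Reals; auto. }
  generalize (Hle c Hcab) (Hle c' Hcab'); intros Hlc Hlc'.
  generalize (Rle_abs (drho c)) (Rabs_maj2 (drho c')); intros.
  assert ((drho c - dphi c) * (b - a) <= 0) by (apply Rmult_le_0_r; lra).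
  assert (0 <= (drho c' + dphi c') * (b - a)) by (apply Rmult_le_pos; lra).
  apply Rabs_le; lra.
Qed.

(* The hyperbolic distance from 0 to t in the disk with density 2 / (1 - |z|^2). *)
Definition hyp_dist0 (t : R) : R := ln ((1 + t) / (1 - t)).

Lemma is_derive_hyp_dist0 (t : R) : -1 < t < 1 -> is_derive hyp_dist0 t (2 / (1 - t ^ 2)).
Proof.
  intros Ht; unfold hyp_dist0; auto_derive.
  - repeat split; [lra |]; apply Rdiv_lt_0_compat; lra.
  - field; repeat split; try lra; nra.
Qed.

Lemma fst_ray_growth (F F' : C -> C) (u : C) (a b k : R) :
  Cmod u = 1 -> -1 < a -> a < b -> b < 1 ->
  (forall c, a <= c <= b -> cderiv F (RtoC c * u) (F' (RtoC c * u)%C)) ->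
  (forall c, a < c < b -> Cmod (F' (RtoC c * u)%C) <= k * (2 / (1 - c ^ 2))) ->
  Rabs (fst (F (RtoC b * u)%C) - fst (F (RtoC a * u)%C)) <= k * hyp_dist0 b - k * hyp_dist0 a.
Proof.
  intros Hu Ha Hab Hb HF HF'.
  apply (Rabs_sub_le_of_is_derive (fun s => fst (F (RtoC s * u)%C)) (fun s => k * hyp_dist0 s)
    (fun c => fst (u * F' (RtoC c * u))%C) (fun c => k * (2 / (1 - c ^ 2)))); [exact Hab | | |].
  - intros c Hc; apply is_derive_fst_ray, HF, Hc.
  - intros c Hc; apply is_derive_scal, is_derive_hyp_dist0; lra.
  - intros c Hc; eapply Rle_trans; [apply re_le_Cmod |].
    rewrite Cmod_mult, Hu, Rmult_1_l; apply HF', Hc.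
Qed.

Lemma polar_form (z : C) :
  exists th, -PI <= th <= PI /\ z = (Cmod z * cos th, Cmod z * sin th).
Proof.
  destruct (Req_dec (Cmod z) 0) as [Hm0 | Hm0].
  { exists 0; split; [generalize PI_RGT_0; lra |].
    rewrite Hm0, (Cmod_eq_0 z Hm0); apply injective_projections; cbn; ring. }
  destruct z as [a b]; set (m := Cmod (a, b)) in *.
  assert (Hm : 0 < m) by (generalize (Cmod_ge_0 (a, b)); fold m; lra).
  assert (Hm2 : m * m = a * a + b * b).
  { unfold m, Cmod; cbn [fst snd]; rewrite sqrt_sqrt; nra. }
  assert (Hc : -1 <= a / m <= 1).
  { generalize (re_le_Cmod (a, b)); cbn [Re fst]; fold m; intros Ha.
    apply Rabs_le_between, (Rmult_le_reg_r m); [exact Hm |].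
    rewrite Rabs_div, (Rabs_right m), Rmult_1_l by lra.
    unfold Rdiv; rewrite Rmult_assoc, Rinv_l, Rmult_1_r by lra; exact Ha. }
  assert (Hs : m * sqrt (1 - (a / m)²) = Rabs b).
  { replace (1 - (a / m)²) with ((b / m)²) by (unfold Rsqr; field_simplify_eq; [lra | lra]).
    rewrite sqrt_Rsqr_abs, Rabs_div, (Rabs_right m) by lra; field; lra. }
  destruct (Rle_lt_dec 0 b) as [Hb | Hb].
  - exists (acos (a / m)); split; [generalize (acos_bound (a / m)); lra |].
    rewrite cos_acos, sin_acos, Hs, Rabs_right by lra.
    apply injective_projections; cbn; [field; lra | reflexivity].
  - exists (- acos (a / m)); split; [generalize (acos_bound (a / m)); lra |].
    rewrite cos_neg, sin_neg, cos_acos, Ropp_mult_distr_r_reverse, sin_acos, Hs, Rabs_left by lra.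
    apply injective_projections; cbn; [field; lra | ring].
Qed.

Lemma polar_unit (z : C) : exists u, Cmod u = 1 /\ z = (RtoC (Cmod z) * u)%C.
Proof.
  destruct (polar_form z) as [th [_ Hz]].
  exists (cos th, sin th); split.
  - unfold Cmod; cbn [fst snd].
    rewrite <- sqrt_1; f_equal; rewrite <- (sin2_cos2 th); unfold Rsqr; ring.
  - rewrite Hz at 1; apply injective_projections; cbn; ring.
Qed.

Lemma bounded_on_circle (F : C -> C) (rho : R) : 0 <= rho ->
  (forall z, Cmod z = rho -> continuous (T := C_UniformSpace) (U := C_UniformSpace) F z) ->
  exists K, forall z, Cmod z = rho -> Cmod (F z) <= K.
Proof.
  intros Hrho HF.
  set (circ := fun th => (rho * cos th, rho * sin th) : C).
  assert (Hcirc : forall th, Cmod (circ th) = rho).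
  { intros th; unfold circ, Cmod; cbn [fst snd].
    replace ((rho * cos th) ^ 2 + (rho * sin th) ^ 2) with (rho ^ 2 * ((sin th)² + (cos th)²))
      by (unfold Rsqr; ring).
    rewrite sin2_cos2, Rmult_1_r; apply sqrt_pow2, Hrho. }
  destruct (bounded_continuity (V := C_NormedModule) (fun th => F (circ th)) (- PI) PI) as [K HK].
  { intros th _; apply (continuous_comp circ F); [| apply HF, Hcirc].
    apply (continuous_comp_2 (fun th => rho * cos th) (fun th => rho * sin th)
      (fun x y => (x, y) : C)).
    - apply (continuous_mult (fun _ => rho) cos); [apply continuous_const | apply continuous_cos].
    - apply (continuous_mult (fun _ => rho) sin); [apply continuous_const | apply continuous_sin].
    - apply (continuous_ext (fun x => x)); [intros [x y]; reflexivity | apply continuous_id]. }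
  exists K; intros z Hz.
  destruct (polar_form z) as [th [Hth Hzth]].
  rewrite Hzth, Hz; left; apply (HK th Hth).
Qed.

Lemma exp_le_compat (x y : R) : x <= y -> exp x <= exp y.
Proof. intros [Hxy | ->]; [left; apply exp_increasing, Hxy | right; reflexivity]. Qed.

Lemma Rpower_hyp_dist0 (t k : R) : -1 < t < 1 ->
  Rpower ((1 + t) / (1 - t)) k = exp (k * hyp_dist0 t) /\
  Rpower ((1 - t) / (1 + t)) k = exp (- (k * hyp_dist0 t)).
Proof.
  intros Ht; unfold Rpower, hyp_dist0; split; [reflexivity |].
  rewrite <- (Rinv_div (1 + t)), ln_Rinv by (apply Rdiv_lt_0_compat; lra).
  f_equal; ring.
Qed.

Lemma in_disk_near (p : C) : in_disk p -> Cnear p in_disk.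
Proof.
  intros Hp; apply Cnear_Cmod; exists (1 - Cmod p); split; [unfold in_disk in Hp; lra |].
  intros z Hz; unfold in_disk.
  replace z with (z - p + p)%C by ring.
  generalize (Cmod_triangle (z - p) p); lra.
Qed.

Section LogRatio.

Variables (f1 f2 g1 g2 L : C -> C) (tau : C) (r0 eps M : R).
Hypothesis df : forall z, in_disk z -> cderiv f1 z (f2 z).
Hypothesis dg : forall z, in_disk z -> cderiv g1 z (g2 z).
Hypothesis HLc : cont_on_disk L.
Hypothesis HLexp : forall z, in_disk z -> cexp (L z) = (g1 z / f1 z)%C.

Lemma cderiv_log_ratio (p : C) : in_disk p ->
  cderiv L p (preSchw g1 g2 p - preSchw f1 f2 p)%C.
Proof.
  intros Hp; apply cderiv_log; auto.
  - eapply filter_imp; [| exact (in_disk_near p Hp)].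
    intros z Hz; exact (proj2 (cexp_eq_Cdiv _ _ _ (HLexp z Hz))).
  - exact (proj1 (cexp_eq_Cdiv _ _ _ (HLexp p Hp))).
Qed.

Hypothesis HM : M < eps.
Hypothesis Hsup : forall z, r0 < Cmod z < 1 ->
  Cmod (preSchw g1 g2 z - preSchw f1 f2 z) * (1 - Cmod z ^ 2) <= M.

Lemma fst_tau_log_ray_growth (u : C) (r : R) : Cmod u = 1 -> 0 < r0 -> r0 < r < 1 ->
  Rabs (fst (tau * L (RtoC r * u))%C - fst (tau * L (RtoC r0 * u))%C)
    <= Cmod tau * eps / 2 * hyp_dist0 r - Cmod tau * eps / 2 * hyp_dist0 r0.
Proof.
  intros Hu Hr0 Hr.
  assert (Hcu : forall c, 0 <= c -> Cmod (RtoC c * u) = c)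
    by (intros c Hc; rewrite Cmod_mult, Hu, Cmod_R, Rabs_right; lra).
  apply (fst_ray_growth (fun w => tau * L w)%C
    (fun w => tau * (preSchw g1 g2 w - preSchw f1 f2 w))%C);
    [exact Hu | lra | apply Hr | apply Hr | |].
  - intros c Hc; apply cderiv_scal, cderiv_log_ratio.
    unfold in_disk; rewrite Hcu; lra.
  - intros c Hc.
    specialize (Hsup (RtoC c * u)%C); rewrite Hcu in Hsup by lra.
    specialize (Hsup ltac:(lra)).
    assert (H1c : 0 < 1 - c ^ 2) by nra.
    rewrite Cmod_mult.
    replace (Cmod tau * eps / 2 * (2 / (1 - c ^ 2))) with (Cmod tau * (eps / (1 - c ^ 2)))
      by (field; lra).
    apply Rmult_le_compat_l; [apply Cmod_ge_0 |].
    apply (Rmult_le_reg_r (1 - c ^ 2)); [exact H1c |].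
    unfold Rdiv; rewrite Rmult_assoc, Rinv_l by lra; lra.
Qed.

End LogRatio.

Theorem mainTheorem10
  (f f1 f2 g g1 g2 : C -> C) (tau : C) (r0 eps : R)
  (Hf : classS f f1 f2) (Hg : classS g g1 g2)
  (Htau : tau <> RtoC 0)
  (Hr0 : 0 < r0 < 1) (Heps : 0 < eps)
  (Hsup : exists M : R, M < eps /\
     forall z : C, r0 < Cmod z < 1 ->
       Cmod (Cminus (preSchw g1 g2 z) (preSchw f1 f2 z)) * (1 - Cmod z ^ 2) <= M)
  (* L = log (h' o f) = log (g'/f'): the continuous branch on Delta vanishing at 0 *)
  (L : C -> C) (HLc : cont_on_disk L) (HL0 : L (RtoC 0) = RtoC 0)
  (HLexp : forall z, in_disk z -> cexp (L z) = Cdiv (g1 z) (f1 z)) :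
  exists C1 C2 : R, 0 < C1 /\ 0 < C2 /\
    forall z : C, r0 < Cmod z < 1 ->
      C1 * Rpower ((1 - Cmod z) / (1 + Cmod z)) (Cmod tau * eps / 2)
        <= Cmod (cexp (Cmult tau (L z))) /\
      Cmod (cexp (Cmult tau (L z)))
        <= C2 * Rpower ((1 + Cmod z) / (1 - Cmod z)) (Cmod tau * eps / 2).
Proof.
  destruct Hf as [_ [df _]], Hg as [_ [dg _]], Hsup as [M [HM Hsup]].
  destruct (bounded_on_circle L r0) as [K HK];
    [lra | intros z Hz; apply HLc; unfold in_disk; lra |].
  set (K0 := Cmod tau * K - Cmod tau * eps / 2 * hyp_dist0 r0).
  exists (exp (- K0)), (exp K0); split; [apply exp_pos |]; split; [apply exp_pos |].
  intros z Hz.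
  destruct (polar_unit z) as [u [Hu Hzu]].
  assert (Hray := fst_tau_log_ray_growth f1 f2 g1 g2 L tau r0 eps M df dg HLc HLexp HM Hsup
    u (Cmod z) Hu (proj1 Hr0) Hz).
  rewrite <- Hzu in Hray.
  assert (Hcirc : Rabs (fst (tau * L (RtoC r0 * u))%C) <= Cmod tau * K).
  { eapply Rle_trans; [apply re_le_Cmod |]; rewrite Cmod_mult.
    apply Rmult_le_compat_l; [apply Cmod_ge_0 | apply HK].
    rewrite Cmod_mult, Hu, Cmod_R, Rabs_right; lra. }
  destruct (Rpower_hyp_dist0 (Cmod z) (Cmod tau * eps / 2) ltac:(lra)) as [Hup Hlow].
  rewrite Cmod_cexp, Hup, Hlow, <- !exp_plus.
  split; apply exp_le_compat; unfold K0;
    generalize (proj1 (Rabs_le_between _ _) Hray) (proj1 (Rabs_le_between _ _) Hcirc); lra.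
Qed.
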